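(* For every pure context $F$, terms $t_0,t_1$ and variable $x\notin\mathrm{fv}(F)$, we have $F[(\lambda x.t_0)\,t_1] \sim (\lambda x.F[t_0])\,t_1$.
   Context: The calculus $\lambda_{\mathcal S}$. Terms: $t ::= x \mid \lambda x.t \mid t\,t \mid \mathcal{S}k.t \mid \langle t\rangle$ (shift and reset); values: $v ::= \lambda x.t \mid x$. $\lambda x.t$ binds $x$, $\mathcal{S}k.t$ binds $k$; terms up to $\alpha$-conversion; $\mathrm{fv}$ free variables; capture-avoiding substitution $t\{v/x\}$. Pure contexts $F ::= [\,] \mid v\,F \mid F\,t$ (free variables of a context are those of its subterms); evaluation contexts $E ::= [\,] \mid v\,E \mid E\,t \mid \langle E\rangle$. Reduction: $E[(\lambda x.t)\,v] \to E[t\{v/x\}]$; $E[\langle F[\mathcal{S}k.t]\rangle] \to E[\langle t\{\lambda x.\langle F[x]\rangle/k\}\rangle]$ ($x\notin\mathrm{fv}(F)$); $E[\langle v\rangle]\to E[v]$. $t\Downarrow t'$ iff $t\to^*t'$ and $t'$ irreducible. Normal forms: values, control stuck terms $F[\mathcal{S}k.t]$, and open stuck terms $E[x\,v]$. Fresh: not free in the terms/contexts considered. Normal form bisimilarity $\sim$: for a relation $\mathcal R$ on terms, $E_0\mathrel{\mathcal R}E_1$ iff either $E_0=E_0'[\langle F_0\rangle]$, $E_1=E_1'[\langle F_1\rangle]$ ($F_i$ pure) with $E_0'[x]\mathrel{\mathcal R}E_1'[x]$ and $\langle F_0[x]\rangle\mathrel{\mathcal R}\langle F_1[x]\rangle$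 ($x$ fresh), or $E_0=F_0$, $E_1=F_1$ pure with $F_0[x]\mathrel{\mathcal R}F_1[x]$ ($x$ fresh). $v\mathbin{@}y$ is $x\,y$ if $v=x$, $t\{y/x\}$ if $v=\lambda x.t$. $\mathcal R^{\mathrm{nf}}$ on normal forms: $v_0\mathrel{\mathcal R^{\mathrm{nf}}}v_1$ if $v_0\mathbin{@}x\mathrel{\mathcal R}v_1\mathbin{@}x$ ($x$ fresh); $F_0[\mathcal{S}k.t_0]\mathrel{\mathcal R^{\mathrm{nf}}}F_1[\mathcal{S}k.t_1]$ if $F_0\mathrel{\mathcal R}F_1$ and $\langle t_0\rangle\mathrel{\mathcal R}\langle t_1\rangle$; $E_0[x\,v_0]\mathrel{\mathcal R^{\mathrm{nf}}}E_1[x\,v_1]$ if $E_0\mathrel{\mathcal R}E_1$ and $v_0\mathrel{\mathcal R^{\mathrm{nf}}}v_1$. $\mathcal R$ is a normal form simulation if $t_0\mathrel{\mathcal R}t_1$ and $t_0\Downarrow t_0'$ imply $t_1\Downarrow t_1'$ with $t_0'\mathrel{\mathcal R^{\mathrm{nf}}}t_1'$; a bisimulation if $\mathcal R$ and $\mathcal R^{-1}$ are simulations; $\sim$ is the largest normal form bisimulation. *)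

(* The calculus lambda_S (shift/reset) with de Bruijn indices:
   terms are represented up to alpha-conversion by de Bruijn terms; free
   variables are the indices that escape all enclosing binders. *)
From Stdlib Require Import Arith Relations.

Inductive term : Type :=
| Var : nat -> term
| Lam : term -> term
| App : term -> term -> term
| Shift : term -> term          (* S k.t, index 0 of the body is k *)
| Reset : term -> term.

Definition is_val (t : term) : Prop :=
  match t with Var _ | Lam _ => True | _ => False end.

Fixpoint lift (k : nat) (t : term) : term :=
  match t with
  | Var n => Var (if Nat.ltb n k then n else S n)
  | Lam b => Lam (lift (S k) b)
  | App a b => App (lift k a) (lift k b)
  | Shift b => Shift (lift (S k) b)
  | Reset b => Reset (lift k b)
  end.

Fixpoint subst (k : nat) (v : term) (t : term) : term :=
  match t with
  | Var n => if Nat.ltb n k then Var n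
             else if Nat.eqb n k then Nat.iter k (lift 0) v
             else Var (pred n)
  | Lam b => Lam (subst (S k) v b)
  | App a b => App (subst k v a) (subst k v b)
  | Shift b => Shift (subst (S k) v b)
  | Reset b => Reset (subst k v b)
  end.

Definition subst0 (v t : term) : term := subst 0 v t.

(* free variable x (index, counted outside all binders) occurs in t *)
Fixpoint free_in (x : nat) (t : term) : Prop :=
  match t with
  | Var n => n = x
  | Lam b => free_in (S x) b
  | App a b => free_in x a \/ free_in x b
  | Shift b => free_in (S x) b
  | Reset b => free_in x b
  end.

(* Contexts.  The hole is never under a binder. *)
Inductive ctx : Type :=
| Hole : ctx
| ArgC : term -> ctx -> ctx
| FunC : ctx -> term -> ctx
| ResetC : ctx -> ctx.

Fixpoint plug (E : ctx) (t : term) : term :=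
  match E with
  | Hole => t
  | ArgC v E' => App v (plug E' t)
  | FunC E' u => App (plug E' t) u
  | ResetC E' => Reset (plug E' t)
  end.

Fixpoint is_ectx (E : ctx) : Prop :=
  match E with
  | Hole => True
  | ArgC v E' => is_val v /\ is_ectx E'
  | FunC E' _ => is_ectx E'
  | ResetC E' => is_ectx E'
  end.

Fixpoint is_pure (E : ctx) : Prop :=
  match E with
  | Hole => True
  | ArgC v E' => is_val v /\ is_pure E'
  | FunC E' _ => is_pure E'
  | ResetC _ => False
  end.

Fixpoint lift_ctx (k : nat) (E : ctx) : ctx :=
  match E with
  | Hole => Hole
  | ArgC v E' => ArgC (lift k v) (lift_ctx k E')
  | FunC E' u => FunC (lift_ctx k E') (lift k u)
  | ResetC E' => ResetC (lift_ctx k E')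
  end.

Fixpoint free_in_ctx (x : nat) (E : ctx) : Prop :=
  match E with
  | Hole => False
  | ArgC v E' => free_in x v \/ free_in_ctx x E'
  | FunC E' u => free_in_ctx x E' \/ free_in x u
  | ResetC E' => free_in_ctx x E'
  end.

(* Reduction.  For the shift rule, \x.<F[x]> with x not free in F is
   Lam (Reset (plug (lift_ctx 0 F) (Var 0))). *)
Inductive step : term -> term -> Prop :=
| step_beta : forall E t v, is_ectx E -> is_val v ->
    step (plug E (App (Lam t) v)) (plug E (subst0 v t))
| step_shift : forall E F t, is_ectx E -> is_pure F ->
    step (plug E (Reset (plug F (Shift t))))
         (plug E (Reset (subst0 (Lam (Reset (plug (lift_ctx 0 F) (Var 0)))) t)))
| step_reset : forall E v, is_ectx E -> is_val v ->
    step (plug E (Reset v)) (plug E v).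

Definition irreducible (t : term) : Prop := forall u, ~ step t u.

Definition eval (t t' : term) : Prop :=
  clos_refl_trans term step t t' /\ irreducible t'.

Definition rel := term -> term -> Prop.

Definition app_val (v : term) (y : nat) : term :=
  match v with
  | Lam b => subst0 (Var y) b
  | _ => App v (Var y)
  end.

Fixpoint comp (E E' : ctx) : ctx :=
  match E with
  | Hole => E'
  | ArgC v E1 => ArgC v (comp E1 E')
  | FunC E1 u => FunC (comp E1 E') u
  | ResetC E1 => ResetC (comp E1 E')
  end.

Definition ctx_rel (R : rel) (E0 E1 : ctx) : Prop :=
  (exists E0' E1' F0 F1,
      is_ectx E0' /\ is_ectx E1' /\ is_pure F0 /\ is_pure F1 /\
      E0 = comp E0' (ResetC F0) /\ E1 = comp E1' (ResetC F1) /\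
      exists x, ~ free_in_ctx x E0 /\ ~ free_in_ctx x E1 /\
        R (plug E0' (Var x)) (plug E1' (Var x)) /\
        R (Reset (plug F0 (Var x))) (Reset (plug F1 (Var x))))
  \/
  (is_pure E0 /\ is_pure E1 /\
      exists x, ~ free_in_ctx x E0 /\ ~ free_in_ctx x E1 /\
        R (plug E0 (Var x)) (plug E1 (Var x))).

Definition val_rel (R : rel) (v0 v1 : term) : Prop :=
  is_val v0 /\ is_val v1 /\
  exists x, ~ free_in x v0 /\ ~ free_in x v1 /\ R (app_val v0 x) (app_val v1 x).

Definition nf_rel (R : rel) (t0 t1 : term) : Prop :=
  val_rel R t0 t1
  \/
  (exists F0 F1 s0 s1,
      is_pure F0 /\ is_pure F1 /\
      t0 = plug F0 (Shift s0) /\ t1 = plug F1 (Shift s1) /\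
      ctx_rel R F0 F1 /\ R (Reset s0) (Reset s1))
  \/
  (exists E0 E1 x v0 v1,
      is_ectx E0 /\ is_ectx E1 /\
      t0 = plug E0 (App (Var x) v0) /\ t1 = plug E1 (App (Var x) v1) /\
      ctx_rel R E0 E1 /\ val_rel R v0 v1).

Definition nf_simulation (R : rel) : Prop :=
  forall t0 t1 t0', R t0 t1 -> eval t0 t0' ->
    exists t1', eval t1 t1' /\ nf_rel R t0' t1'.

Definition nf_bisimulation (R : rel) : Prop :=
  nf_simulation R /\ nf_simulation (fun a b => R b a).

Definition nf_bisimilar (t0 t1 : term) : Prop :=
  exists R : rel, nf_bisimulation R /\ R t0 t1.

Notation "t0 ~nf t1" := (nf_bisimilar t0 t1) (at level 70).

(* Both sides must evaluate the shared argument first: in a pure context, an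
   abstraction applied to a non-value only lets its argument reduce.  So
   consider all pairs G1[(\x.b1) u], G2[(\x.b2) u] with G1, G2 pure and
   G1[b1{v/x}] = G2[b2{v/x}] for every value v.  Reducing u preserves this
   shape; once u is a value both sides beta-reduce to the same term; and if u
   gets stuck, both sides are stuck on the same redex, in contexts that again
   form such pairs.  Hence these pairs together with the identity form a
   normal form bisimulation. *)
From Stdlib Require Import Arith Lia Relations.

Lemma plug_comp E E' t : plug (comp E E') t = plug E (plug E' t).
Proof. induction E; simpl; congruence. Qed.

Lemma comp_assoc E1 E2 E3 : comp (comp E1 E2) E3 = comp E1 (comp E2 E3).
Proof. induction E1; simpl; congruence. Qed.

Lemma ectx_comp E E' : is_ectx E -> is_ectx E' -> is_ectx (comp E E').
Proof. induction E; simpl; tauto. Qed.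

Lemma pure_comp E E' : is_pure E -> is_pure E' -> is_pure (comp E E').
Proof. induction E; simpl; tauto. Qed.

Lemma pure_ectx E : is_pure E -> is_ectx E.
Proof. induction E; simpl; tauto. Qed.

Lemma ectx_pure_or_reset E : is_ectx E ->
  is_pure E \/ exists E' F, is_ectx E' /\ is_pure F /\ E = comp E' (ResetC F).
Proof.
  induction E as [| v E IH | E IH u | E IH]; simpl.
  - now left.
  - intros [Hv HE]; destruct (IH HE) as [Hp | (E' & F & HE' & HF & ->)].
    + now left.
    + right; exists (ArgC v E'), F; simpl; auto.
  - intros HE; destruct (IH HE) as [Hp | (E' & F & HE' & HF & ->)].
    + now left.
    + right; exists (FunC E' u), F; simpl; auto.
  - intros HE; destruct (IH HE) as [Hp | (E' & F & HE' & HF & ->)].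
    + right; exists Hole, E; simpl; auto.
    + right; exists (ResetC E'), F; simpl; auto.
Qed.

Lemma plug_not_val E t : ~ is_val t -> ~ is_val (plug E t).
Proof. destruct E; simpl; auto. Qed.

Lemma subst_lift t k v : subst k v (lift k t) = t.
Proof.
  revert k; induction t; intros k; simpl; try congruence.
  destruct (Nat.ltb_spec n k); cbn [subst].
  - now rewrite (proj2 (Nat.ltb_lt n k)).
  - destruct (Nat.ltb_spec (S n) k); [lia |].
    destruct (Nat.eqb_spec (S n) k); [lia | reflexivity].
Qed.

Lemma subst_plug_lift_ctx F k v t :
  subst k v (plug (lift_ctx k F) t) = plug F (subst k v t).
Proof. induction F; simpl; rewrite ?IHF, ?subst_lift; auto. Qed.

Lemma free_in_bounded t : exists N, forall x, N <= x -> ~ free_in x t.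
Proof.
  induction t as [n | t [N H] | t1 [N1 H1] t2 [N2 H2] | t [N H] | t [N H]]; simpl.
  - exists (S n); intros; lia.
  - exists N; intros; apply H; lia.
  - exists (max N1 N2); intros x Hx [C | C]; [apply (H1 x) | apply (H2 x)]; auto; lia.
  - exists N; intros; apply H; lia.
  - exists N; auto.
Qed.

Lemma free_in_ctx_bounded E : exists N, forall x, N <= x -> ~ free_in_ctx x E.
Proof.
  induction E as [| t E [N H] | E [N H] t | E [N H]]; simpl.
  - exists 0; auto.
  - destruct (free_in_bounded t) as [N' H'].
    exists (max N N'); intros x Hx [C | C]; [apply (H' x) | apply (H x)]; auto; lia.
  - destruct (free_in_bounded t) as [N' H'].
    exists (max N N'); intros x Hx [C | C]; [apply (H x) | apply (H' x)]; auto; lia.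
  - exists N; auto.
Qed.

Lemma exists_fresh t : exists x, ~ free_in x t.
Proof. destruct (free_in_bounded t) as [N H]; exists N; auto. Qed.

Lemma exists_fresh_ctx2 E1 E2 : exists x, ~ free_in_ctx x E1 /\ ~ free_in_ctx x E2.
Proof.
  destruct (free_in_ctx_bounded E1) as [N1 H1], (free_in_ctx_bounded E2) as [N2 H2].
  exists (max N1 N2); split; [apply H1 | apply H2]; lia.
Qed.

Inductive contract : term -> term -> Prop :=
| contract_beta t v : is_val v -> contract (App (Lam t) v) (subst0 v t)
| contract_shift F t : is_pure F ->
    contract (Reset (plug F (Shift t)))
             (Reset (subst0 (Lam (Reset (plug (lift_ctx 0 F) (Var 0)))) t))
| contract_reset v : is_val v -> contract (Reset v) v.

Lemma contract_not_val r r' : contract r r' -> ~ is_val r.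
Proof. now destruct 1. Qed.

Lemma step_plug_contract E r r' : is_ectx E -> contract r r' -> step (plug E r) (plug E r').
Proof. intros HE []; constructor; auto. Qed.

Lemma step_decompose s w : step s w ->
  exists E r r', is_ectx E /\ contract r r' /\ s = plug E r /\ w = plug E r'.
Proof. destruct 1; do 3 eexists; repeat split; eauto; constructor; auto. Qed.

Lemma step_ctx E a b : is_ectx E -> step a b -> step (plug E a) (plug E b).
Proof.
  intros HE Hab; destruct (step_decompose _ _ Hab) as (E0 & r & r' & HE0 & Hr & -> & ->).
  rewrite <- !plug_comp; apply step_plug_contract; auto using ectx_comp.
Qed.

Lemma step_or_normal_form t :
  (exists u, step t u) \/ is_val t \/
  (exists F s, is_pure F /\ t = plug F (Shift s)) \/
  (exists E x v, is_ectx E /\ is_val v /\ t = plug E (App (Var x) v)).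
Proof.
  induction t as [n | t _ | t1 IH1 t2 IH2 | t _ | t IH].
  - right; left; exact I.
  - right; left; exact I.
  - destruct IH1 as [[u Hu] | [Hv1 | [(F & s & HF & ->) | (E & x & v & HE & Hv & ->)]]].
    + left; exists (App u t2); exact (step_ctx (FunC Hole t2) _ _ I Hu).
    + destruct IH2 as [[u Hu] | [Hv2 | [(F & s & HF & ->) | (E & x & v & HE & Hv & ->)]]].
      * left; exists (App t1 u); exact (step_ctx (ArgC t1 Hole) _ _ (conj Hv1 I) Hu).
      * destruct t1 as [x | b | | |]; try contradiction.
        -- right; right; right; exists Hole, x, t2; simpl; auto.
        -- left; eexists; exact (step_beta Hole b t2 I Hv2).
      * right; right; left; exists (ArgC t1 F), s; simpl; auto.
      * right; right; right; exists (ArgC t1 E), x, v; simpl; auto.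
    + right; right; left; exists (FunC F t2), s; simpl; auto.
    + right; right; right; exists (FunC E t2), x, v; simpl; auto.
  - right; right; left; exists Hole, t; simpl; auto.
  - destruct IH as [[u Hu] | [Hv | [(F & s & HF & ->) | (E & x & v & HE & Hv & ->)]]].
    + left; exists (Reset u); exact (step_ctx (ResetC Hole) _ _ I Hu).
    + left; eexists; exact (step_reset Hole t I Hv).
    + left; eexists; exact (step_shift Hole F s I HF).
    + right; right; right; exists (ResetC E), x, v; simpl; auto.
Qed.

Lemma plug_pure_app_eq_redex G E r r' b u :
  is_pure G -> is_ectx E -> contract r r' ->
  plug E r = plug G (App (Lam b) u) ->
  (E = G /\ r = App (Lam b) u) \/
  (exists E', is_ectx E' /\ E = comp G (ArgC (Lam b) E') /\ u = plug E' r).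
Proof.
  intros HG; revert E; induction G as [| v G IH | G IH t | G]; intros E HE Hr Heq;
    simpl in HG; try contradiction.
  - destruct E as [| v E | E t | E]; simpl in *; try discriminate.
    + now left.
    + injection Heq as -> <-; right; exists E; tauto.
    + injection Heq as Hl _; exfalso.
      apply (plug_not_val E r (contract_not_val _ _ Hr)); now rewrite Hl.
  - destruct HG as [Hv HG]; destruct E as [| v' E | E t | E]; simpl in *; try discriminate.
    + subst r; inversion Hr; subst; exfalso.
      now apply (plug_not_val G (App (Lam b) u)).
    + injection Heq as -> Heq.
      destruct (IH HG E (proj2 HE) Hr Heq) as [[-> ->] | (E' & HE' & -> & ->)].
      * now left.
      * right; exists E'; auto.
    + injection Heq as Hl _; exfalso.
      apply (plug_not_val E r (contract_not_val _ _ Hr)); now rewrite Hl.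
  - destruct E as [| v' E | E t' | E]; simpl in *; try discriminate.
    + subst r; inversion Hr as [b' v' Hv' Heq | |]; subst; exfalso.
      apply (plug_not_val G (App (Lam b) u)); [exact id | now rewrite <- Heq].
    + injection Heq as Hl _; exfalso.
      apply (plug_not_val G (App (Lam b) u)); [exact id | rewrite <- Hl; apply HE].
    + injection Heq as Heq ->.
      destruct (IH HG E HE Hr Heq) as [[-> ->] | (E' & HE' & -> & ->)].
      * now left.
      * right; exists E'; auto.
Qed.

Lemma step_pending_app_inv G b u w : is_pure G ->
  step (plug G (App (Lam b) u)) w ->
  (is_val u /\ w = plug G (subst0 u b)) \/
  (exists u', step u u' /\ w = plug G (App (Lam b) u')).
Proof.
  intros HG Hs; destruct (step_decompose _ _ Hs) as (E & r & r' & HE & Hr & Heq & ->).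
  destruct (plug_pure_app_eq_redex G E r r' b u HG HE Hr (eq_sym Heq))
    as [[-> ->] | (E' & HE' & -> & ->)].
  - left; inversion Hr; auto.
  - right; exists (plug E' r'); split.
    + now apply step_plug_contract.
    + now rewrite plug_comp.
Qed.

Lemma step_pending_arg G b u u' : is_pure G -> step u u' ->
  step (plug G (App (Lam b) u)) (plug G (App (Lam b) u')).
Proof.
  intros HG Hu; pose proof (step_ctx (comp G (ArgC (Lam b) Hole)) u u') as Hs.
  rewrite !plug_comp in Hs; apply Hs; auto.
  apply ectx_comp; simpl; auto using pure_ectx.
Qed.

Lemma steps_pending_arg G b u u' : is_pure G -> clos_refl_trans term step u u' ->
  clos_refl_trans term step (plug G (App (Lam b) u)) (plug G (App (Lam b) u')).
Proof.
  intros HG; induction 1; eauto using rt_step, rt_refl, rt_trans, step_pending_arg.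
Qed.

Lemma irreducible_pending_app G b u : is_pure G ->
  irreducible (plug G (App (Lam b) u)) <-> irreducible u /\ ~ is_val u.
Proof.
  intros HG; split.
  - intros Hirr; split.
    + intros u' Hu; exact (Hirr _ (step_pending_arg G b u u' HG Hu)).
    + intros Hv; apply (Hirr (plug G (subst0 u b))).
      apply step_beta; auto using pure_ectx.
  - intros [Hu Hnv] w Hs.
    destruct (step_pending_app_inv G b u w HG Hs) as [[Hv _] | (u' & Hu' & _)].
    + contradiction.
    + exact (Hu u' Hu').
Qed.

Lemma eval_pending_app_inv G b u a : is_pure G ->
  eval (plug G (App (Lam b) u)) a ->
  (exists u', clos_refl_trans term step u u' /\ irreducible u' /\ ~ is_val u' /\
              a = plug G (App (Lam b) u')) \/
  (exists v, clos_refl_trans term step u v /\ is_val v /\ eval (plug G (subst0 v b)) a).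
Proof.
  intros HG [Hsteps Hirr]; apply clos_rt_rt1n in Hsteps.
  remember (plug G (App (Lam b) u)) as s eqn:Hs; revert u Hs.
  induction Hsteps as [s | s s1 a Hstep Hrest IH]; intros u ->.
  - left; exists u; apply (irreducible_pending_app G b u HG) in Hirr.
    repeat split; auto using rt_refl; apply Hirr.
  - destruct (step_pending_app_inv G b u s1 HG Hstep) as [[Hv ->] | (u' & Hu & ->)].
    + right; exists u; repeat split; auto using rt_refl, clos_rt1n_rt.
    + destruct (IH Hirr u' eq_refl) as [(u'' & ? & ? & ? & ->) | (v & ? & ? & ?)].
      * left; exists u''; split; [eapply rt_trans; eauto using rt_step | tauto].
      * right; exists v; split; [eapply rt_trans; eauto using rt_step | tauto].
Qed.

Inductive delayed_beta_pair : term -> term -> Prop :=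
| DelayedBeta G1 b1 G2 b2 u : is_pure G1 -> is_pure G2 ->
    (forall v, is_val v -> plug G1 (subst0 v b1) = plug G2 (subst0 v b2)) ->
    delayed_beta_pair (plug G1 (App (Lam b1) u)) (plug G2 (App (Lam b2) u)).

Lemma delayed_beta_pair_sym a c : delayed_beta_pair a c -> delayed_beta_pair c a.
Proof. destruct 1 as [G1 b1 G2 b2 u HG1 HG2 Hagree]; constructor; auto using eq_sym. Qed.

Section DelayedBetaSimulation.

Variable Q : rel.
Hypothesis Q_refl : forall a, Q a a.
Hypothesis Q_delayed : forall a c, delayed_beta_pair a c -> Q a c.

Lemma val_rel_refl v : is_val v -> val_rel Q v v.
Proof. intros Hv; destruct (exists_fresh v) as [x Hx]; repeat split; eauto. Qed.

Lemma ctx_rel_refl E : is_ectx E -> ctx_rel Q E E.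
Proof.
  intros HE; destruct (exists_fresh_ctx2 E E) as [x [Hx _]].
  destruct (ectx_pure_or_reset E HE) as [Hp | (E' & F & HE' & HF & ->)].
  - right; repeat split; eauto.
  - left; exists E', E', F, F; repeat split; eauto.
Qed.

Lemma nf_rel_refl t : irreducible t -> nf_rel Q t t.
Proof.
  intros Ht.
  destruct (step_or_normal_form t)
    as [[u Hu] | [Hv | [(F & s & HF & ->) | (E & x & v & HE & Hv & ->)]]].
  - now destruct (Ht u).
  - left; now apply val_rel_refl.
  - right; left; exists F, F, s, s; repeat split; auto using ctx_rel_refl, pure_ectx.
  - right; right; exists E, E, x, v, v; intuition auto using ctx_rel_refl, val_rel_refl.
Qed.

Variables (G1 G2 : ctx) (b1 b2 : term).
Hypotheses (HG1 : is_pure G1) (HG2 : is_pure G2).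
Hypothesis Hagree : forall v, is_val v -> plug G1 (subst0 v b1) = plug G2 (subst0 v b2).

Lemma Q_delayed_pending u : Q (plug G1 (App (Lam b1) u)) (plug G2 (App (Lam b2) u)).
Proof. apply Q_delayed; constructor; auto. Qed.

Lemma ctx_rel_pending E : is_ectx E ->
  ctx_rel Q (comp G1 (ArgC (Lam b1) E)) (comp G2 (ArgC (Lam b2) E)).
Proof.
  intros HE.
  destruct (exists_fresh_ctx2 (comp G1 (ArgC (Lam b1) E)) (comp G2 (ArgC (Lam b2) E)))
    as (y & Hy1 & Hy2).
  destruct (ectx_pure_or_reset E HE) as [Hp | (E' & F & HE' & HF & ->)].
  - right; repeat split; try (apply pure_comp; simpl; auto).
    exists y; repeat split; auto; rewrite !plug_comp; apply Q_delayed_pending.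
  - left; exists (comp G1 (ArgC (Lam b1) E')), (comp G2 (ArgC (Lam b2) E')), F, F.
    repeat split; auto; try (apply ectx_comp; simpl; auto using pure_ectx).
    1, 2: now rewrite comp_assoc.
    exists y; repeat split; auto; rewrite !plug_comp; apply Q_delayed_pending.
Qed.

Lemma nf_rel_pending u : irreducible u -> ~ is_val u ->
  nf_rel Q (plug G1 (App (Lam b1) u)) (plug G2 (App (Lam b2) u)).
Proof.
  intros Hu Hnv.
  destruct (step_or_normal_form u)
    as [[u' Hu'] | [Hv | [(F & s & HF & ->) | (E & x & v & HE & Hv & ->)]]].
  - now destruct (Hu u').
  - contradiction.
  - right; left; exists (comp G1 (ArgC (Lam b1) F)), (comp G2 (ArgC (Lam b2) F)), s, s.
    rewrite !plug_comp; repeat split; auto using ctx_rel_pending, pure_ectx;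
      apply pure_comp; simpl; auto.
  - right; right; exists (comp G1 (ArgC (Lam b1) E)), (comp G2 (ArgC (Lam b2) E)), x, v, v.
    rewrite !plug_comp; intuition auto using ctx_rel_pending, val_rel_refl;
      apply ectx_comp; simpl; auto using pure_ectx.
Qed.

Lemma eval_pending_sim u a : eval (plug G1 (App (Lam b1) u)) a ->
  exists c, eval (plug G2 (App (Lam b2) u)) c /\ nf_rel Q a c.
Proof.
  intros Ha; destruct (eval_pending_app_inv G1 b1 u a HG1 Ha)
    as [(u' & Hu & Hirr & Hnv & ->) | (v & Hu & Hv & [Hsteps Hirr])].
  - exists (plug G2 (App (Lam b2) u')); split; [split |].
    + now apply steps_pending_arg.
    + now apply irreducible_pending_app.
    + now apply nf_rel_pending.
  - exists a; split; [split |]; auto using nf_rel_refl.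
    apply rt_trans with (plug G2 (App (Lam b2) v)); [now apply steps_pending_arg |].
    apply rt_trans with (plug G2 (subst0 v b2)); [| now rewrite <- Hagree].
    apply rt_step, step_beta; auto using pure_ectx.
Qed.

End DelayedBetaSimulation.

Lemma nf_simulation_delayed_beta (Q : rel) :
  (forall a, Q a a) -> (forall a c, delayed_beta_pair a c -> Q a c) ->
  forall t0 t1 t0', t0 = t1 \/ delayed_beta_pair t0 t1 -> eval t0 t0' ->
  exists t1', eval t1 t1' /\ nf_rel Q t0' t1'.
Proof.
  intros Q_refl Q_delayed t0 t1 t0' [<- | [G1 b1 G2 b2 u HG1 HG2 Hagree]] Ht0.
  - exists t0'; split; [exact Ht0 | exact (nf_rel_refl Q Q_refl t0' (proj2 Ht0))].
  - exact (eval_pending_sim Q Q_refl Q_delayed G1 G2 b1 b2 HG1 HG2 Hagree u t0' Ht0).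
Qed.

Theorem proposition4 (F : ctx) (t0 t1 : term) :
  is_pure F ->
  plug F (App (Lam t0) t1) ~nf App (Lam (plug (lift_ctx 0 F) t0)) t1.
Proof.
  intros HF; exists (fun a c => a = c \/ delayed_beta_pair a c); split; [split |].
  - intros a c a'; apply nf_simulation_delayed_beta; auto.
  - intros a c a' Hca; apply nf_simulation_delayed_beta; auto using delayed_beta_pair_sym.
    destruct Hca as [-> | Hca]; auto using delayed_beta_pair_sym.
  - right; apply (DelayedBeta F t0 Hole (plug (lift_ctx 0 F) t0) t1); simpl; auto.
    intros v _; unfold subst0; now rewrite subst_plug_lift_ctx.
Qed.
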